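(* Let $H$ be a complex Hadamard matrix. Let $\{R,R_1,R_2\}$ be a partition of the set of rows of $H$ and $\{C,C_1,C_2\}$ a partition of the set of columns of $H$, and suppose there is $s\in\mathbb{C}$ such that: (1) every column of the submatrix with rows $R$ and columns $C$ has entry sum $s$; (2) every column of the submatrix with rows $R_1$ and columns $C_1$ has entry sum $-\overline{s}$; (3) the submatrix with rows $R$ and columns $C_1$ and the submatrix with rows $R_1$ and columns $C$ are all-ones matrices; (4) every column of the submatrix with rows $R$ and columns $C_2$, and every column of the submatrix with rows $R_1$ and columns $C_2$, has entry sum $0$. Then for every $z\in\mathbb{T}$, the matrix $K$ obtained from $H$ by multiplying every entry of the submatrix with rows $R_1$ and columns $C_2$ by $z$, and simultaneously every entry of the submatrix with rows $R_2$ and columns $C_1$ by $\overline{z}$ (all other entries unchanged), is a complex Hadamard matrix.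
   Context: $\mathbb{T}$ is the set of complex numbers of modulus $1$. A complex Hadamard matrix of order $n$ is an $n\times n$ matrix with all entries in $\mathbb{T}$ and $HH^{\ast}=nI_n$. *)

From HB Require Import structures.
From mathcomp Require Import all_boot all_order all_algebra.
From mathcomp Require Import complex.
From mathcomp Require Import reals.
Set Implicit Arguments. Unset Strict Implicit. Unset Printing Implicit Defensive.
Import Order.TTheory GRing.Theory Num.Theory.
Local Open Scope ring_scope.

Definition conj_tr (C : numClosedFieldType) (n : nat) (H : 'M[C]_n) : 'M[C]_n :=
  \matrix_(i, j) (H j i)^*.

Definition complex_hadamard (C : numClosedFieldType) (n : nat) (H : 'M[C]_n) : Prop :=
  (forall i j, `|H i j| = 1) /\ H *m conj_tr H = n%:R%:M.

Definition partition3 (n : nat) (A B D : {set 'I_n}) : Prop :=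
  [/\ A :&: B = set0, A :&: D = set0, B :&: D = set0 & A :|: B :|: D = setT].

Definition twist (C : numClosedFieldType) (n : nat) (H : 'M[C]_n)
  (R1 R2 C1 C2 : {set 'I_n}) (z : C) : 'M[C]_n :=
  \matrix_(i, j)
    if (i \in R1) && (j \in C2) then z * H i j
    else if (i \in R2) && (j \in C1) then z^* * H i j
    else H i j.

From HB Require Import structures.
From mathcomp Require Import all_boot all_order all_algebra.
From mathcomp Require Import complex.
From mathcomp Require Import reals.
From mathcomp Require Import ring.
Set Implicit Arguments.
Unset Strict Implicit.
Unset Printing Implicit Defensive.
Import Order.TTheory GRing.Theory Num.Theory.
Local Open Scope ring_scope.

(* It suffices to show that the columns of K are orthogonal.  Split the inner
   product of columns j and k into its parts over the row blocks R, R1, R2: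
   twisting leaves the R part alone and multiplies the R1 and R2 parts by
   unimodular factors, which are both 1 when j and k lie in the same column
   block.  Otherwise the hypotheses kill the affected parts: for j in C and
   k in C1 the R and R1 parts are conj s and -conj s, so the R2 part vanishes;
   for j in C and k in C2 the R1 part is a column sum of H over R1, hence 0;
   for j in C1 and k in C2 the R part is 0 and the R1 and R2 parts, both
   scaled by z, add up to 0. *)

Lemma mulmx_scalarC (F : fieldType) n (c : F) (A B : 'M[F]_n) :
  c != 0 -> A *m B = c%:M -> B *m A = c%:M.
Proof.
move=> c_neq0 AB; have AcB : A *m (c^-1 *: B) = 1%:M.
  by rewrite -scalemxAr AB scale_scalar_mx mulVf.
have /(congr1 ( *:%R c)) := mulmx1C AcB.
by rewrite -scalemxAl scalerA mulfV // scale1r scale_scalar_mx mulr1.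
Qed.

Lemma conj_tr_mulmxE (F : numClosedFieldType) n (A B : 'M[F]_n) j k :
  (conj_tr A *m B) j k = \sum_i (A i j)^* * B i k.
Proof. by rewrite mxE; apply: eq_bigr => i _; rewrite mxE. Qed.

Lemma complex_hadamard_tr (F : numClosedFieldType) n (H : 'M[F]_n) :
  complex_hadamard H <->
  (forall i j, `|H i j| = 1) /\ conj_tr H *m H = n%:R%:M.
Proof.
case: n H => [|n] H; first by split=> -[H1 _]; split=> //; apply/matrixP=> -[].
by split=> -[H1 HH]; split=> //; apply: mulmx_scalarC HH; rewrite pnatr_eq0.
Qed.

Section Partition3.

Variables (n : nat) (A B D : {set 'I_n}).
Hypothesis pABD : partition3 A B D.

Variant mem3_spec (a b d : bool) : bool -> bool -> bool -> Set :=
  | Mem3In1 of a : mem3_spec a b d true false false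
  | Mem3In2 of b : mem3_spec a b d false true false
  | Mem3In3 of d : mem3_spec a b d false false true.

Lemma partition3P x :
  mem3_spec (x \in A) (x \in B) (x \in D) (x \in A) (x \in B) (x \in D).
Proof.
case: pABD => /setP/(_ x) AB /setP/(_ x) AD /setP/(_ x) BD /setP/(_ x) ABD.
move: AB AD BD ABD; rewrite !inE.
by case: (x \in A) (x \in B) (x \in D) => -[] [] //= *; constructor.
Qed.

Lemma big_partition3 (V : nmodType) (f : 'I_n -> V) :
  \sum_i f i = \sum_(i in A) f i + \sum_(i in B) f i + \sum_(i in D) f i.
Proof.
rewrite [LHS](bigID (mem A)) [X in _ + X = _](bigID (mem B)) addrA /=.
by congr (_ + _ + _); apply: eq_bigl => i; case: partition3P.
Qed.

End Partition3.

Section Twist.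

Variables (F : numClosedFieldType) (n : nat) (H : 'M[F]_n).
Variables (Rr R1 R2 Cc C1 C2 : {set 'I_n}) (s z : F).
Hypothesis hadH : complex_hadamard H.
Hypotheses (pR : partition3 Rr R1 R2) (pC : partition3 Cc C1 C2).
Hypotheses (sum_Rr_Cc : forall j, j \in Cc -> \sum_(i in Rr) H i j = s)
  (sum_R1_C1 : forall j, j \in C1 -> \sum_(i in R1) H i j = - s^*)
  (ones_Rr_C1 : forall j, j \in C1 -> {in Rr, forall i, H i j = 1})
  (ones_R1_Cc : forall j, j \in Cc -> {in R1, forall i, H i j = 1})
  (sum_Rr_C2 : forall j, j \in C2 -> \sum_(i in Rr) H i j = 0)
  (sum_R1_C2 : forall j, j \in C2 -> \sum_(i in R1) H i j = 0).
Hypothesis z_unit : `|z| = 1.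

Definition gram (A : {set 'I_n}) j k := \sum_(i in A) (H i j)^* * H i k.

Lemma gram_partition j k :
  gram Rr j k + gram R1 j k + gram R2 j k = n%:R *+ (j == k).
Proof.
case/complex_hadamard_tr: hadH => _ /matrixP/(_ j k).
by rewrite conj_tr_mulmxE (big_partition3 pR) mxE.
Qed.

Lemma gram_onesl (A : {set 'I_n}) j k : {in A, forall i, H i j = 1} ->
  gram A j k = \sum_(i in A) H i k.
Proof. by move=> Hj; apply: eq_bigr => i /Hj->; rewrite conjC1 mul1r. Qed.

Lemma gram_onesr (A : {set 'I_n}) j k : {in A, forall i, H i k = 1} ->
  gram A j k = (\sum_(i in A) H i j)^*.
Proof.
by move=> Hk; rewrite rmorph_sum; apply: eq_bigr => i /Hk->; rewrite mulr1.
Qed.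

Lemma gram_conj (A : {set 'I_n}) j k : gram A k j = (gram A j k)^*.
Proof.
by rewrite rmorph_sum; apply: eq_bigr => i _; rewrite rmorphM /= conjCK mulrC.
Qed.

Section Columns.

Variables j k : 'I_n.

Lemma gram_R2_Cc_C1 : j \in Cc -> k \in C1 -> gram R2 j k = 0.
Proof.
move=> jC kC1; have jk : j != k.
  by apply: contraTneq kC1 => <-; case: (partition3P pC j) jC.
have /eqP := gram_partition j k; rewrite (negPf jk).
rewrite (gram_onesr _ (ones_Rr_C1 kC1)) (gram_onesl _ (ones_R1_Cc jC)).
by rewrite sum_Rr_Cc // sum_R1_C1 // addrN add0r => /eqP.
Qed.

Lemma gram_R1_Cc_C2 : j \in Cc -> k \in C2 -> gram R1 j k = 0.
Proof. by move=> jC kC2; rewrite (gram_onesl _ (ones_R1_Cc jC)) sum_R1_C2. Qed.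

Lemma gram_R1R2_C1_C2 :
  j \in C1 -> k \in C2 -> gram R1 j k + gram R2 j k = 0.
Proof.
move=> jC1 kC2; have jk : j != k.
  by apply: contraTneq kC2 => <-; case: (partition3P pC j) jC1.
have /eqP := gram_partition j k; rewrite (negPf jk).
by rewrite (gram_onesl _ (ones_Rr_C1 jC1)) sum_Rr_C2 // add0r => /eqP.
Qed.

End Columns.

Local Notation K := (twist H R1 R2 C1 C2 z).

Lemma twist_gram j k :
  let c i := if i \in C2 then z else 1 in
  let d i := if i \in C1 then z^* else 1 in
  (conj_tr K *m K) j k =
  gram Rr j k + (c j)^* * c k * gram R1 j k + (d j)^* * d k * gram R2 j k.
Proof.
move=> c d; rewrite conj_tr_mulmxE (big_partition3 pR) /gram !big_distrr /=.
congr (_ + _ + _); apply: eq_bigr => i; rewrite !mxE /c /d;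
  case: (partition3P pR i) => //= _ _;
  by case: (j \in _); case: (k \in _); rewrite /= ?rmorphM ?conjC1; ring.
Qed.

Lemma twist_hadamard : complex_hadamard K.
Proof.
have [H1 _] := hadH; have zKz : z^* * z = 1 by rewrite -normCKC z_unit expr1n.
apply/complex_hadamard_tr; split=> [i j|].
  rewrite mxE; case: ifP => _; last case: ifP => _;
  by rewrite ?normrM ?norm_conjC ?z_unit H1 ?mulr1.
apply/matrixP=> j k; rewrite twist_gram mxE -gram_partition.
case: (partition3P pC j) => jC; case: (partition3P pC k) => kC /=;
  rewrite ?conjC1 ?conjCK ?mulr1 ?mul1r ?zKz ?[z * z^*]mulrC ?zKz ?mul1r //.
- by rewrite gram_R2_Cc_C1 // mulr0.
- by rewrite gram_R1_Cc_C2 // mulr0.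
- by rewrite [gram R2 j k]gram_conj gram_R2_Cc_C1 // rmorph0 mulr0.
- by rewrite -!addrA -mulrDr gram_R1R2_C1_C2 // mulr0.
- by rewrite [gram R1 j k]gram_conj gram_R1_Cc_C2 // rmorph0 mulr0.
- rewrite -!addrA -mulrDr [gram R1 j k]gram_conj [gram R2 j k]gram_conj.
  by rewrite -rmorphD gram_R1R2_C1_C2 // rmorph0 mulr0.
Qed.

End Twist.

Local Open Scope complex_scope.

Theorem theorem6p7 (R : realType) (n : nat) (H : 'M[R[i]]_n)
  (Rr R1 R2 Cc C1 C2 : {set 'I_n}) (s : R[i]) :
  complex_hadamard H ->
  partition3 Rr R1 R2 -> partition3 Cc C1 C2 ->
  (forall j, j \in Cc -> \sum_(i in Rr) H i j = s) ->
  (forall j, j \in C1 -> \sum_(i in R1) H i j = - s^*) ->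
  (forall i j, i \in Rr -> j \in C1 -> H i j = 1) ->
  (forall i j, i \in R1 -> j \in Cc -> H i j = 1) ->
  (forall j, j \in C2 -> \sum_(i in Rr) H i j = 0) ->
  (forall j, j \in C2 -> \sum_(i in R1) H i j = 0) ->
  forall z : R[i], `|z| = 1 -> complex_hadamard (twist H R1 R2 C1 C2 z).
Proof.
move=> hadH pR pC sum_Rr_Cc sum_R1_C1 ones_Rr_C1 ones_R1_Cc sum_Rr_C2 sum_R1_C2.
move=> z z_unit.
have ones_Rr_C1' j : j \in C1 -> {in Rr, forall i, H i j = 1}.
  by move=> jC1 i iR; exact: ones_Rr_C1.
have ones_R1_Cc' j : j \in Cc -> {in R1, forall i, H i j = 1}.
  by move=> jC i iR; exact: ones_R1_Cc.
exact: (twist_hadamard hadH pR pC sum_Rr_Cc sum_R1_C1 ones_Rr_C1' ones_R1_Cc'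
          sum_Rr_C2 sum_R1_C2 z_unit).
Qed.
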